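(* Let $n\ge1$, $0\le k\le n$, and let $H$ be an operator on $(\mathbb{C}^2)^{\otimes n}$ that can be written as a sum of $k$-local terms. Then $$\mathrm{Tr}(HB_k)=2^{k-n}\,\mathrm{Tr}(HC_k),$$ and $\mathrm{Tr}(HB_r)=0$ for all $r$ with $k<r\le n$.
   Context: Qubits $1,\dots,n$, $Z_j$ the Pauli $Z$ on qubit $j$. An operator is $k$-local if it acts non-trivially on at most $k$ qubits. For $m=0,\dots,n$, $\Pi_m$ is the projector onto the span of computational basis states with exactly $m$ qubits in state $|1\rangle$. Define $C_0=I$ and for $l\ge1$, $C_l=\sum_{i_1<\cdots<i_l}Z_{i_1}\cdots Z_{i_l}$. For $0\le k\le n$ define $B_k=\sum_{m=0}^k(-1)^m\binom{n-m}{k-m}\Pi_m$. *)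

From Stdlib Require List.
From HB Require Import structures.
From mathcomp Require Import all_boot all_order all_algebra.
Set Implicit Arguments. Unset Strict Implicit. Unset Printing Implicit Defensive.
Import Order.TTheory GRing.Theory Num.Theory.
Local Open Scope ring_scope.

(* Computational basis of (C^2)^{⊗n}: a basis state |x_1 ... x_n> is encoded
   by the set of qubits (in 'I_n, i.e. qubits 0..n-1) that are in state |1>. *)
Definition basis (n : nat) := {set 'I_n}.

Definition op (C : numClosedFieldType) (n : nat) := basis n -> basis n -> C.

Section Ops.
Variables (C : numClosedFieldType) (n : nat).

Definition opI : op C n := fun x y => (x == y)%:R.
Definition opmul (A B : op C n) : op C n :=
  fun x y => \sum_(z : basis n) A x z * B z y.
Definition opTr (A : op C n) : C := \sum_(x : basis n) A x x.

Definition Zop (j : 'I_n) : op C n :=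
  fun x y => (x == y)%:R * (-1) ^+ (j \in x).

(* A acts non-trivially only on the qubits in S: A = A_S ⊗ I_{complement S}. *)
Definition acts_only_on (S : {set 'I_n}) (A : op C n) : Prop :=
  exists F : op C n,
    (forall x y x' y' : basis n, (forall i, i \in S -> (i \in x) = (i \in x') /\ (i \in y) = (i \in y')) ->
                       F x y = F x' y') /\
    (forall x y : basis n, A x y = if [forall i in ~: S, (i \in x) == (i \in y)] then F x y else 0).

Definition k_local (k : nat) (A : op C n) : Prop :=
  exists S : {set 'I_n}, (#|S| <= k)%N /\ acts_only_on S A.

Definition sum_of_k_local (k : nat) (H : op C n) : Prop :=
  exists s : seq (op C n), (forall A, List.In A s -> k_local k A) /\
    forall x y : basis n, H x y = \sum_(A <- s) A x y.

Definition Pi (m : nat) : op C n := fun x y => ((x == y) && (#|x| == m))%:R.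

Definition Cl (l : nat) : op C n :=
  fun x y => \sum_(S : {set 'I_n} | #|S| == l) (\big[opmul/opI]_(j in S) Zop j) x y.

Definition Bk (k : nat) : op C n :=
  fun x y => \sum_(m < k.+1) (-1) ^+ m * ('C(n - m, k - m))%:R * Pi m x y.

End Ops.

From mathcomp Require Import all_boot all_order all_algebra.
Import Order.TTheory GRing.Theory Num.Theory.
Local Open Scope ring_scope.
Set Implicit Arguments. Unset Strict Implicit. Unset Printing Implicit Defensive.

(* B_r and C_k are diagonal in the computational basis, so their traces against
   H only see the diagonal of H, and for a term A acting on a set S of qubits
   the diagonal entry at x depends on x only through x :&: S.  Writing the
   diagonal entries of B_r and C_k as sums over r-sets J (resp. k-sets R) of
   qubits and exchanging the sums, toggling a qubit of J (resp. R) outside S is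
   a sign-reversing involution, so only J = S (resp. R = S) contributes, and
   nothing does when #|S| < r.  For J = R = S both traces reduce to
   \sum_(x \subset S) A x x (-1)^#|x|, counted on the C side once for each of
   the 2^(n-k) fillings of the qubits outside S. *)

(* Operators have no eqType structure, so [eq_big_seq] does not apply to lists
   of them. *)
Lemma eq_big_In (R : Type) (idx : R) (op : R -> R -> R) (I : Type) (s : seq I)
    (F G : I -> R) :
  (forall i, List.In i s -> F i = G i) ->
  \big[op/idx]_(i <- s) F i = \big[op/idx]_(i <- s) G i.
Proof.
elim: s => [|a s IHs] eqFG; rewrite ?big_nil // !big_cons eqFG /=; last by left.
by rewrite IHs // => i si; apply: eqFG; right.
Qed.

Lemma sum_sign_reversing_involution (R : numDomainType) (I : finType)
    (f : I -> I) (P : pred I) (F : I -> R) :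
  involutive f -> (forall i, P (f i) = P i) -> (forall i, F (f i) = - F i) ->
  \sum_(i | P i) F i = 0.
Proof.
move=> fK Pf Ff; have sumN : - \sum_(i | P i) F i = \sum_(i | P i) F i.
  rewrite -sumrN [RHS](reindex_inj (can_inj fK)) /=.
  by apply: eq_big => i; [rewrite Pf | rewrite Ff].
by apply/eqP; rewrite -eqNr sumN.
Qed.

Section SubsetCombinatorics.
Variable T : finType.
Implicit Types (i j : T) (x y S J : {set T}).

Definition toggle j x : {set T} := if j \in x then x :\ j else j |: x.

Lemma in_toggle j x i : (i \in toggle j x) = (i == j) (+) (i \in x).
Proof.
rewrite /toggle; case: (eqVneq i j) => [->|ij]; case: ifP => jx;
  by rewrite !inE ?eqxx ?(negPf ij) ?jx.
Qed.

Lemma toggleK j : involutive (toggle j).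
Proof. by move=> x; apply/setP=> i; rewrite !in_toggle addbA addbb. Qed.

Lemma sign_toggle (R : pzRingType) j x : (-1) ^+ #|toggle j x| = - (-1) ^+ #|x| :> R.
Proof.
rewrite /toggle; case: ifP => jx; last by rewrite cardsU1 jx exprS mulN1r.
by rewrite [in RHS](cardsD1 j x) jx exprS mulN1r opprK.
Qed.

Lemma toggle_subset j x J : j \in J -> (toggle j x \subset J) = (x \subset J).
Proof.
move=> jJ; apply/subsetP/subsetP => sxJ i; have := sxJ i; rewrite in_toggle;
  by case: (eqVneq i j) => [->|].
Qed.

Lemma setI_toggle j x S :
  toggle j x :&: S = if j \in S then toggle j (x :&: S) else x :&: S.
Proof.
apply/setP=> i; case: ifP => jS; rewrite !(inE, in_toggle);
  by case: (eqVneq i j) => [->|]; rewrite ?jS ?andbT ?andbF.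
Qed.

Lemma sum_card_eq_supported (R : nmodType) S r (F : {set T} -> R) :
  (#|S| <= r)%N -> (forall J, ~~ (J \subset S) -> F J = 0) ->
  \sum_(J : {set T} | #|J| == r) F J = if #|S| == r then F S else 0.
Proof.
move=> leSr F0; have FJ0 (J : {set T}) : #|J| == r -> J != S -> F J = 0.
  move=> /eqP cJ nJS; apply: F0; apply: contra nJS => sJS.
  by rewrite eqEcard sJS cJ.
case: ifP => cS; last first.
  by rewrite big1 // => J cJ; rewrite FJ0 //; apply: contraFneq cS => <-.
by rewrite (bigD1 S) //= big1 ?addr0 // => J /andP[]; exact: FJ0.
Qed.

Lemma setUDK x y : y \subset ~: x -> (x :|: y) :\: x = y.
Proof.
by move=> syx; rewrite setDUl setDv set0U; apply/setDidPl; rewrite disjoints_subset.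
Qed.

Lemma card_supsets x r : (#|x| <= r)%N ->
  #|[set J : {set T} | x \subset J & #|J| == r]| = 'C(#|T| - #|x|, r - #|x|).
Proof.
move=> lexr; rewrite -[in RHS](cardsC x) addKn -cards_draws.
rewrite -[in RHS](card_in_imset (f := setU x)); last first.
  move=> y1 y2; rewrite !inE => /andP[sy1x _] /andP[sy2x _] eqy.
  by rewrite -(setUDK sy1x) eqy setUDK.
apply: eq_card => J; rewrite inE; apply/andP/imsetP => [[sxJ /eqP cJ]|[y]].
  exists (J :\: x); last by rewrite -{1}(setID J x) (setIidPr sxJ).
  by rewrite inE cardsDS // cJ eqxx setDE subsetIr.
rewrite inE => /andP[syx /eqP cy] ->; split; first exact: subsetUl.
rewrite cardsU disjoint_setI0 ?cards0 ?subn0 ?cy ?subnKC //.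
by rewrite disjoint_sym disjoints_subset.
Qed.

Lemma card_setI_fiber S y : y \subset S ->
  #|[set x : {set T} | x :&: S == y]| = (2 ^ #|~: S|)%N.
Proof.
move=> syS; rewrite -card_powerset -[in RHS](card_in_imset (f := setU y)); last first.
  move=> z1 z2; rewrite !inE => sz1S sz2S eqz.
  have sCSy : ~: S \subset ~: y by rewrite setCS.
  by rewrite -(setUDK (subset_trans sz1S sCSy)) eqz setUDK // (subset_trans sz2S).
apply: eq_card => x; rewrite inE; apply/eqP/imsetP => [xSy|[z]].
  exists (x :\: S); first by rewrite inE setDE subsetIr.
  by rewrite -xSy setID.
rewrite inE => szS ->; rewrite setIUl (setIidPl syS) disjoint_setI0 ?setU0 //.
by rewrite disjoints_subset.
Qed.

Lemma sum_setI (R : nmodType) S (h : {set T} -> R) :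
  \sum_(x : {set T}) h (x :&: S) =
  (\sum_(y : {set T} | y \subset S) h y) *+ (2 ^ #|~: S|)%N.
Proof.
rewrite (partition_big (fun x => x :&: S) (fun y => y \subset S)) => [|x _];
  last exact: subsetIr.
rewrite -sumrMnl; apply: eq_bigr => y syS; rewrite -(card_setI_fiber syS) -sumr_const.
by apply: eq_big => [x|x /eqP -> //]; rewrite inE.
Qed.

End SubsetCombinatorics.

Section DiagonalOperators.
Context {C : numClosedFieldType} {n : nat}.
Implicit Types (x y : {set 'I_n}) (A D : op C n) (d : {set 'I_n} -> C).

Definition diag_op d : op C n := fun x y => (x == y)%:R * d x.

Lemma opTr_mul_diag A D d :
  D =2 diag_op d -> opTr (opmul A D) = \sum_(x : {set 'I_n}) A x x * d x.
Proof.
move=> Dd; apply: eq_bigr => x _; rewrite /opmul (bigD1 x) //= Dd /diag_op eqxx mul1r.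
by rewrite big1 ?addr0 // => z zx; rewrite Dd /diag_op (negPf zx) mul0r mulr0.
Qed.

Lemma opmul_diag d1 d2 : opmul (diag_op d1) (diag_op d2) =2 diag_op (d1 \* d2).
Proof.
move=> x y; rewrite /opmul (bigD1 x) //= big1 ?addr0 => [|z zx]; last first.
  by rewrite /diag_op eq_sym (negPf zx) !mul0r.
by rewrite /diag_op eqxx mul1r mulrCA.
Qed.

Lemma prod_Zop_diag (R : {set 'I_n}) :
  \big[@opmul C n/@opI C n]_(j in R) Zop C j =2 diag_op (fun x => (-1) ^+ #|x :&: R|).
Proof.
pose sgn j x : C := (-1) ^+ (j \in x).
have diag_prod : \big[@opmul C n/@opI C n]_(j in R) Zop C j
                 =2 diag_op (\big[(fun e1 e2 => e1 \* e2)/fun=> 1]_(j in R) sgn j).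
  apply: (big_ind2 (fun D e => D =2 diag_op e)) => [x y|D1 e1 D2 e2 De1 De2 x y|j _ //].
    by rewrite /opI /diag_op mulr1.
  by rewrite -opmul_diag /opmul; apply: eq_bigr => z _; rewrite De1 De2.
move=> x y; rewrite diag_prod /diag_op; congr (_ * _).
rewrite (big_morph (fun e : {set 'I_n} -> C => e x) (id1 := 1) (op1 := *%R)) //.
rewrite prodrXr -sum1_card [in RHS]big_mkcond [in LHS]big_mkcond /=.
by congr (_ ^+ _); apply: eq_bigr => j _; rewrite inE; case: (j \in x); case: (j \in R).
Qed.

(* Summing over the r-sets containing x, rather than using their binomial count,
   lets this sum be exchanged with the sum over x. *)
Definition B_weight r x : C :=
  \sum_(J : {set 'I_n} | (x \subset J) && (#|J| == r)) (-1) ^+ #|x|.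

Definition C_weight k x : C :=
  \sum_(R : {set 'I_n} | #|R| == k) (-1) ^+ #|x :&: R|.

Lemma Bk_diag r : @Bk C n r =2 diag_op (B_weight r).
Proof.
move=> x y; rewrite /Bk /Pi /diag_op /B_weight sumr_const.
case: (eqVneq x y) => [_|xy]; last first.
  by rewrite mul0r big1 // => m _; rewrite andFb mulr0.
rewrite mul1r; case: (leqP #|x| r) => [lexr|ltrx].
  rewrite (bigD1 (Ordinal (lexr : (#|x| < r.+1)%N))) //= eqxx mulr1.
  rewrite big1 ?addr0 => [|m xm]; last first.
    suff -> : (#|x| == m) = false by rewrite mulr0.
    by apply: contraNF xm => /eqP cx; apply/eqP/val_inj; rewrite /= cx.
  rewrite (eq_card (B := [set J : {set 'I_n} | x \subset J & #|J| == r])) => [|J];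
    last by rewrite inE.
  by rewrite card_supsets // card_ord mulr_natr.
have -> : #|[pred J : {set 'I_n} | (x \subset J) && (#|J| == r)]| = 0%N.
  apply: eq_card0 => J; apply/andP => -[/subset_leq_card lexJ /eqP cJ].
  by move: ltrx; rewrite ltnNge -cJ lexJ.
rewrite mulr0n big1 // => m _; rewrite /=.
by rewrite (gtn_eqF (leq_trans (ltn_ord m) ltrx)) mulr0.
Qed.

Lemma Cl_diag k : @Cl C n k =2 diag_op (C_weight k).
Proof.
move=> x y; rewrite /Cl /diag_op /C_weight mulr_sumr.
by apply: eq_bigr => R _; exact: prod_Zop_diag.
Qed.

Lemma acts_only_on_diag S A :
  acts_only_on S A -> forall x, A x x = A (x :&: S) (x :&: S).
Proof.
case=> F [FS AF] x; have refl z : [forall i in ~: S, (i \in z) == (i \in z)].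
  by apply/forall_inP.
by rewrite !AF !refl; apply: FS => i iS; rewrite inE iS andbT.
Qed.

Section LocalSums.
Variables (S : {set 'I_n}) (g : {set 'I_n} -> C).
Hypothesis g_setI : forall x, g x = g (x :&: S).

Lemma g_toggle j x : j \notin S -> g (toggle j x) = g x.
Proof. by move=> jS; rewrite g_setI setI_toggle (negPf jS) -g_setI. Qed.

Lemma sum_mul_B_weight r : (#|S| <= r)%N ->
  \sum_(x : {set 'I_n}) g x * B_weight r x =
  if #|S| == r then \sum_(x : {set 'I_n} | x \subset S) g x * (-1) ^+ #|x| else 0.
Proof.
move=> leSr; under eq_bigr do rewrite mulr_sumr.
rewrite (exchange_big_dep (fun J : {set 'I_n} => #|J| == r)) => [|x J _ /andP[]//] /=.
rewrite (eq_bigr (fun J : {set 'I_n} =>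
                   \sum_(x : {set 'I_n} | x \subset J) g x * (-1) ^+ #|x|)).
  rewrite (sum_card_eq_supported leSr) // => J /subsetPn[j jJ jS].
  apply: (sum_sign_reversing_involution (toggleK j)) => x.
    exact: toggle_subset.
  by rewrite g_toggle // sign_toggle mulrN.
by move=> J cJ; apply: eq_bigl => x; rewrite cJ andbT.
Qed.

Lemma sum_mul_C_weight k : (#|S| <= k)%N ->
  \sum_(x : {set 'I_n}) g x * C_weight k x =
  if #|S| == k
  then (\sum_(x : {set 'I_n} | x \subset S) g x * (-1) ^+ #|x|) *+ (2 ^ (n - k))%N
  else 0.
Proof.
move=> leSk; under eq_bigr do rewrite mulr_sumr.
rewrite exchange_big /= (sum_card_eq_supported leSk) => [|R /subsetPn[j jR jS]]; last first.
  apply: (sum_sign_reversing_involution (toggleK j)) => // x.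
  by rewrite g_toggle // setI_toggle jR sign_toggle mulrN.
case: eqP => // <-.
rewrite (eq_bigr (fun x => g (x :&: S) * (-1) ^+ #|x :&: S|)) => [|x _]; last first.
  by rewrite -g_setI.
by rewrite (sum_setI S (fun y => g y * (-1) ^+ #|y|)) cardsCs setCK card_ord.
Qed.

Lemma sum_mul_C_weight_eq k : (#|S| <= k)%N ->
  \sum_(x : {set 'I_n}) g x * C_weight k x =
  2 ^+ (n - k) * \sum_(x : {set 'I_n}) g x * B_weight k x.
Proof.
move=> leSk; rewrite (sum_mul_C_weight leSk) (sum_mul_B_weight leSk).
by case: eqP => _; rewrite ?mulr0 // -mulr_natl natrX.
Qed.

Lemma sum_mul_B_weight_eq0 r : (#|S| < r)%N ->
  \sum_(x : {set 'I_n}) g x * B_weight r x = 0.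
Proof. by move=> ltSr; rewrite (sum_mul_B_weight (ltnW ltSr)) ltn_eqF. Qed.

End LocalSums.

End DiagonalOperators.

Theorem lemma2 (C : numClosedFieldType) (n k : nat) (H : op C n) :
  (1 <= n)%N -> (k <= n)%N -> sum_of_k_local k H ->
  opTr (opmul H (@Bk C n k)) = (2 ^+ (n - k))^-1 * opTr (opmul H (@Cl C n k)) /\
  (forall r : nat, (k < r)%N -> (r <= n)%N -> opTr (opmul H (@Bk C n r)) = 0).
Proof.
move=> _ _ [s [s_local H_sum]].
have trH D d : D =2 diag_op d ->
    opTr (opmul H D) = \sum_(A <- s) \sum_(x : {set 'I_n}) A x x * d x.
  move/opTr_mul_diag->; rewrite exchange_big /=.
  by apply: eq_bigr => x _; rewrite H_sum mulr_suml.
have diag_local A : List.In A s ->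
    exists2 S : {set 'I_n}, (#|S| <= k)%N & forall x, A x x = A (x :&: S) (x :&: S).
  by move/s_local=> [S [leSk /acts_only_on_diag]]; exists S.
split=> [|r ltkr _].
  rewrite (trH _ _ (Bk_diag k)) (trH _ _ (Cl_diag k)).
  transitivity ((2 ^+ (n - k))^-1 *
                \sum_(A <- s) 2 ^+ (n - k) * \sum_x A x x * B_weight k x).
    by rewrite -mulr_sumr mulKf // expf_neq0 // pnatr_eq0.
  congr (_ * _); apply: eq_big_In => A /diag_local[S leSk AS].
  by rewrite (sum_mul_C_weight_eq AS leSk).
rewrite (trH _ _ (Bk_diag r)).
transitivity (\sum_(A <- s) (0 : C)); last exact: big1_eq.
apply: eq_big_In => A /diag_local[S leSk AS].
exact: (sum_mul_B_weight_eq0 AS (leq_ltn_trans leSk ltkr)).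
Qed.
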